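(* Let $\mathcal{A}\subset\mathscr{P}(\mathbb{N}_0)$ be a Furstenberg family and let $f:X\to X$ be a continuous map on a metric space $(X,d)$. The following are equivalent: (i) $(X,f)$ is weakly-mixing and topologically $\mathcal{A}$-transitive; (ii) $(X^N,f_{(N)})$ is topologically $\mathcal{A}$-transitive for every $N\in\mathbb{N}$; (iii) $(\mathcal{K}(X),\overline{f})$ is topologically $\mathcal{A}$-transitive; (iv) $(\mathcal{F}_\infty(X),\hat f)$ is topologically $\mathcal{A}$-transitive; (v) $(\mathcal{F}_0(X),\hat f)$ is topologically $\mathcal{A}$-transitive; (vi) $(\mathcal{F}_S(X),\hat f)$ is topologically $\mathcal{A}$-transitive; (vii) $(\mathcal{F}_E(X),\hat f)$ is topologically $\mathcal{A}$-transitive.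
   Context: $\mathbb{N}=\{1,2,\dots\}$, $\mathbb{N}_0=\mathbb{N}\cup\{0\}$, $\mathbb{I}=[0,1]$. A Furstenberg family is a collection $\mathcal{A}\subset\mathscr{P}(\mathbb{N}_0)$ with $\varnothing\notin\mathcal{A}$ that is upward hereditary ($A\in\mathcal{A}$, $A\subset B\subset\mathbb{N}_0$ implies $B\in\mathcal{A}$). For a continuous map $g$ on a topological space $Y$ and $U,V\subset Y$, $\mathcal{N}_g(U,V)=\{n\in\mathbb{N}_0: g^n(U)\cap V\neq\varnothing\}$; $(Y,g)$ is topologically $\mathcal{A}$-transitive if $\mathcal{N}_g(U,V)\in\mathcal{A}$ for all non-empty open $U,V\subset Y$; topologically transitive if $\mathcal{N}_g(U,V)\cap\mathbb{N}\neq\varnothing$ for all such $U,V$; weakly-mixing if $(Y\times Y,g\times g)$ is topologically transitive. $f_{(N)}=f\times\cdots\times f$ ($N$ times) acts on $X^N$ with the product topology. Fuzzy setting: for $u:X\to\mathbb{I}$, $u_\alpha=\{x: u(x)\ge\alpha\}$ for $\alpha\in]0,1]$ and $u_0=\overline{\{x:u(x)>0\}}$. $\mathcal{F}(X)$ is the set of upper-semicontinuous $u:X\to\mathbb{I}$ with $u_0$ compact and $u_1\neq\varnothing$. $\mathcal{K}(X)$ is the set of non-empty compact subsets of $X$ with the Hausdorff metric $d_H(A,B)=\max\{\sup_{a\in A}d(a,B),\sup_{b\in B}d(b,A)\}$, and $\overline f(K)=f(K)$. The Zadeh extension is $\hat f(u)(x)=\sup\{u(y): f(y)=x\}$ if $f^{-1}(\{x\})\ne\varnothing$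 and $0$ otherwise. Metrics on $\mathcal{F}(X)$: supremum metric $d_\infty(u,v)=\sup_{\alpha\in\mathbb{I}}d_H(u_\alpha,v_\alpha)$; Skorokhod metric $d_0(u,v)=\inf\{\varepsilon>0:\exists\xi\in\mathcal{T}$ with $\sup_{\alpha}|\xi(\alpha)-\alpha|\le\varepsilon$ and $d_\infty(u,\xi\circ v)\le\varepsilon\}$, where $\mathcal{T}$ is the set of strictly increasing homeomorphisms of $\mathbb{I}$; with $\overline d((x,\alpha),(y,\beta))=\max\{d(x,y),|\alpha-\beta|\}$ on $X\times\mathbb{I}$, $\operatorname{end}(u)=\{(x,\alpha)\in X\times\mathbb{I}:u(x)\ge\alpha\}$ and $\operatorname{send}(u)=\operatorname{end}(u)\cap(u_0\times\mathbb{I})$, the endograph metric $d_E(u,v)$ and sendograph metric $d_S(u,v)$ are the $\overline d$-Hausdorff distances between the endographs, respectively sendographs. $\mathcal{F}_\infty(X),\mathcal{F}_0(X),\mathcal{F}_S(X),\mathcal{F}_E(X)$ denote $\mathcal{F}(X)$ with $d_\infty,d_0,d_S,d_E$. *)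

From mathcomp Require Import all_boot all_order all_algebra.
From mathcomp Require Import all_classical all_reals.
From mathcomp Require Export Rstruct.
Set Implicit Arguments. Unset Strict Implicit. Unset Printing Implicit Defensive.
Import Order.TTheory GRing.Theory Num.Theory.
Local Open Scope classical_set_scope.
Local Open Scope ring_scope.

Section Defs.
Variable R : realType.

Definition Furstenberg_family (A : set (set nat)) : Prop :=
  ~ A set0 /\ (forall B C : set nat, A B -> B `<=` C -> A C).

Definition is_metric {X : Type} (d : X -> X -> R) : Prop :=
  [/\ forall x y, 0 <= d x y, forall x y, d x y = 0 <-> x = y,
      forall x y, d x y = d y x & forall x y z, d x z <= d x y + d y z].

Definition mcontinuous {X : Type} (d : X -> X -> R) (f : X -> X) : Prop :=
  forall x e, 0 < e -> exists2 dl, 0 < dl & forall y, d x y < dl -> d (f x) (f y) < e.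

Definition mopen {T : Type} (D : T -> T -> R) (U : set T) : Prop :=
  forall x, U x -> exists2 e, 0 < e & forall y, D x y < e -> U y.

Definition sub_open {T : Type} (P : set T) (D : T -> T -> R) (U : set T) : Prop :=
  U `<=` P /\ forall x, U x -> exists2 e, 0 < e & forall y, P y -> D x y < e -> U y.

Definition prod_open {X : Type} (d : X -> X -> R) (N : nat) (W : set ('I_N -> X)) : Prop :=
  forall x, W x -> exists2 e, 0 < e & forall y, (forall i, d (x i) (y i) < e) -> W y.

Definition pair_open {X : Type} (d : X -> X -> R) (W : set (X * X)) : Prop :=
  forall p, W p -> exists2 e, 0 < e &
    forall q, d p.1 q.1 < e -> d p.2 q.2 < e -> W q.

Definition prodmap {X : Type} (f : X -> X) (N : nat) : ('I_N -> X) -> ('I_N -> X) :=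
  fun x i => f (x i).

Definition Nset {T : Type} (g : T -> T) (U V : set T) : set nat :=
  [set n | exists2 x, U x & V (iter n g x)].

Definition A_transitive {T : Type} (opn : set T -> Prop) (g : T -> T)
  (A : set (set nat)) : Prop :=
  forall U V, opn U -> opn V -> U !=set0 -> V !=set0 -> A (Nset g U V).

Definition top_transitive {T : Type} (opn : set T -> Prop) (g : T -> T) : Prop :=
  forall U V, opn U -> opn V -> U !=set0 -> V !=set0 ->
    exists n, (0 < n)%N /\ Nset g U V n.

Definition weakly_mixing {X : Type} (d : X -> X -> R) (f : X -> X) : Prop :=
  top_transitive (pair_open d) (fun p => (f p.1, f p.2)).

Definition mcompact {X : Type} (d : X -> X -> R) (K : set X) : Prop :=
  forall (I : Type) (G : I -> set X), (forall i, mopen d (G i)) ->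
    (forall x, K x -> exists i, G i x) ->
    exists (n : nat) (h : 'I_n -> I), forall x, K x -> exists j, G (h j) x.

Definition Kspace {X : Type} (d : X -> X -> R) (K : set X) : Prop :=
  K !=set0 /\ mcompact d K.

Definition dist_set {T : Type} (D : T -> T -> R) (x : T) (B : set T) : R :=
  inf [set D x b | b in B].

Definition hausdorff {T : Type} (D : T -> T -> R) (A B : set T) : R :=
  Num.max (sup [set dist_set D a B | a in A]) (sup [set dist_set D b A | b in B]).

Definition I01 (a : R) : Prop := 0 <= a <= 1.

Definition mclosure {X : Type} (d : X -> X -> R) (S : set X) : set X :=
  [set x | forall e, 0 < e -> exists2 y, S y & d x y < e].

Definition level {X : Type} (d : X -> X -> R) (u : X -> R) (a : R) : set X :=
  if a == 0 then mclosure d [set x | 0 < u x] else [set x | a <= u x].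

Definition usc {X : Type} (d : X -> X -> R) (u : X -> R) : Prop :=
  forall x t, u x < t -> exists2 e, 0 < e & forall y, d x y < e -> u y < t.

Definition fuzzy {X : Type} (d : X -> X -> R) (u : X -> R) : Prop :=
  [/\ forall x, I01 (u x), usc d u, mcompact d (level d u 0)
    & level d u 1 !=set0].

Definition zadeh {X : Type} (f : X -> X) (u : X -> R) : X -> R :=
  fun x => if `[< exists y, f y = x >] then sup [set u y | y in f @^-1` [set x]]
           else 0.

Definition d_inf {X : Type} (d : X -> X -> R) (u v : X -> R) : R :=
  sup [set hausdorff d (level d u a) (level d v a) | a in I01].

Definition incr_homeo (xi : R -> R) : Prop :=
  [/\ forall a b, I01 a -> I01 b -> a < b -> xi a < xi b,
      forall a, I01 a -> I01 (xi a),
      forall b, I01 b -> exists2 a, I01 a & xi a = b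
    & forall a, I01 a -> forall e, 0 < e -> exists2 dl, 0 < dl &
        forall b, I01 b -> `|a - b| < dl -> `|xi a - xi b| < e].

Definition d_0 {X : Type} (d : X -> X -> R) (u v : X -> R) : R :=
  inf [set e | 0 < e /\ exists xi, [/\ incr_homeo xi,
          sup [set `|xi a - a| | a in I01] <= e
        & d_inf d u (xi \o v) <= e]].

Definition dbar {X : Type} (d : X -> X -> R) (p q : X * R) : R :=
  Num.max (d p.1 q.1) `|p.2 - q.2|.

Definition endg {X : Type} (u : X -> R) : set (X * R) :=
  [set p | I01 p.2 /\ p.2 <= u p.1].

Definition sendg {X : Type} (d : X -> X -> R) (u : X -> R) : set (X * R) :=
  endg u `&` [set p | level d u 0 p.1].

Definition d_E {X : Type} (d : X -> X -> R) (u v : X -> R) : R :=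
  hausdorff (dbar d) (endg u) (endg v).

Definition d_S {X : Type} (d : X -> X -> R) (u v : X -> R) : R :=
  hausdorff (dbar d) (sendg d u) (sendg d v).

End Defs.

Arguments prod_open {R X} d N W.
Arguments prodmap {X} f N x i.

From mathcomp Require Import all_boot all_order all_algebra.
From mathcomp Require Import all_classical all_reals Rstruct.
From mathcomp Require Import lra.
Import Order.TTheory GRing.Theory Num.Theory.
Local Open Scope classical_set_scope.
Local Open Scope ring_scope.

(* All seven conditions lie between two properties of [(X, f)]:
   A-transitivity of every product [f_(N)], and A-transitivity of [f \x f]
   from diagonal boxes [U \x U] to boxes [V \x W], which yields weak mixing.
   Weak mixing makes [f] A-transitive on all products, because finitely many
   pairs of open sets are refined by a single pair whose hitting times are
   hitting times of all of them.  In each hyperspace metric, a compact set or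
   a fuzzy set is approximated by one carried by finitely many (weighted)
   points, on which the induced map acts pointwise, so that boxes of [X^N]
   map into balls of the hyperspace.  Conversely, the sets lying deep inside
   [U], and those meeting (or peaking above [1/2] in) both [V] and [W], form
   open sets of the hyperspace, and their hitting times are common hitting
   times of [U] into [V] and into [W]. *)

(** * Metric spaces and the Hausdorff distance *)

Lemma sup_le_ge0 {R : realType} (S : set R) (M : R) :
  ubound S M -> 0 <= M -> sup S <= M.
Proof.
move=> SM M0; have [->|/set0P S0] := eqVneq S set0; first by rewrite sup0.
exact: ge_sup.
Qed.

Lemma common_radius {R : realType} {e1 e2 : R} : 0 < e1 -> 0 < e2 ->
  exists r, [/\ 0 < r, 3 * r < e1 & 3 * r < e2].
Proof.
move=> e10 e20; exists (Num.min e1 e2 / 4).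
have : Num.min e1 e2 <= e1 by rewrite ge_min lexx.
have : Num.min e1 e2 <= e2 by rewrite ge_min lexx orbT.
have : 0 < Num.min e1 e2 by rewrite lt_min e10 e20.
by split; lra.
Qed.

Section Hausdorff.
Context {R : realType} {T : Type} {D : T -> T -> R}.
Hypothesis D_ge0 : forall p q, 0 <= D p q.

Lemma dist_set_le p (Q : set T) q : Q q -> dist_set D p Q <= D p q.
Proof. by move=> Qq; apply: ge_inf; [exists 0 => _ [b _ <-]|exists q]. Qed.

Lemma dist_set_lt p (Q : set T) r :
  Q !=set0 -> dist_set D p Q < r -> exists2 q, Q q & D p q < r.
Proof.
move=> [q Qq] /(inf_lt (ex_intro _ (D p q) (ex_intro2 _ _ q Qq erefl))).
by case=> _ [b Qb <-]; exists b.
Qed.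

Lemma hausdorffC (P Q : set T) : hausdorff D P Q = hausdorff D Q P.
Proof. by rewrite /hausdorff maxC. Qed.

Lemma hausdorff_le (P Q : set T) r : 0 <= r ->
  (forall p, P p -> exists2 q, Q q & D p q <= r) ->
  (forall q, Q q -> exists2 p, P p & D q p <= r) -> hausdorff D P Q <= r.
Proof.
move=> r0 PQ QP; rewrite /hausdorff ge_max.
apply/andP; split; apply: sup_le_ge0 => // _ [x Px <-].
  by have [q Qq] := PQ _ Px; apply: le_trans; apply: dist_set_le.
by have [p Pp] := QP _ Px; apply: le_trans; apply: dist_set_le.
Qed.

(* The bound [M] is needed because [sup] of an unbounded set is [0]. *)
Lemma hausdorff_lt {P Q : set T} {M r p} :
  (forall p, P p -> exists2 q, Q q & D p q <= M) ->
  hausdorff D P Q < r -> P p -> exists2 q, Q q & D p q < r.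
Proof.
move=> PQ; rewrite /hausdorff gt_max => /andP[lt_r _] Pp.
have [q Qq _] := PQ _ Pp; apply: dist_set_lt; first by exists q.
apply: le_lt_trans lt_r; apply: ub_le_sup; last by exists p.
exists M => _ [a Pa <-]; have [b Qb] := PQ _ Pa.
exact/le_trans/dist_set_le.
Qed.

End Hausdorff.

Lemma sub_openI {R : realType} {T : Type} {P : set T} {D : T -> T -> R} {U V : set T} :
  sub_open P D U -> sub_open P D V -> sub_open P D (U `&` V).
Proof.
move=> [PU oU] [_ oV]; split=> [x [/PU]//|x [Ux Vx]].
have [e1 e10 H1] := oU x Ux; have [e2 e20 H2] := oV x Vx.
exists (Num.min e1 e2) => [|y Py]; first by rewrite lt_min e10 e20.
by rewrite lt_min => /andP[y1 y2]; split; [apply: H1|apply: H2].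
Qed.

Section MetricSpace.
Context {R : realType} {X : Type} {d : X -> X -> R}.
Hypothesis dm : is_metric d.

Lemma metric_ge0 x y : 0 <= d x y. Proof. by case: dm. Qed.
Lemma metric_xx x : d x x = 0. Proof. by case: dm => _ /(_ x x)[_ ->]. Qed.
Lemma metric_eq0 x y : d x y = 0 -> x = y. Proof. by case: dm => _ /(_ x y)[]. Qed.
Lemma metricC x y : d x y = d y x. Proof. by case: dm. Qed.
Lemma metric_triangle x y z : d x z <= d x y + d y z. Proof. by case: dm. Qed.

Lemma metric_gt0 x y : x <> y -> 0 < d x y.
Proof. by move=> xy; rewrite lt_def metric_ge0 andbT; apply/eqP => /metric_eq0. Qed.

Lemma mopen_ball x r : mopen d [set y | d x y < r].
Proof.
move=> y /= xy; exists (r - d x y) => [|z yz /=]; first by rewrite subr_gt0.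
by have := metric_triangle x y z; lra.
Qed.

Lemma ball_center x {r} : 0 < r -> [set y | d x y < r] x.
Proof. by rewrite /= metric_xx. Qed.

Lemma mopenI {U V : set X} : mopen d U -> mopen d V -> mopen d (U `&` V).
Proof.
move=> oU oV x [Ux Vx]; have [e1 e10 H1] := oU x Ux; have [e2 e20 H2] := oV x Vx.
exists (Num.min e1 e2) => [|y]; first by rewrite lt_min e10 e20.
by rewrite lt_min => /andP[y1 y2]; split; [apply: H1|apply: H2].
Qed.

Lemma mopenT : mopen d setT.
Proof. by move=> x _; exists 1. Qed.

Lemma mcompact_finite {N} (z : 'I_N -> X) {K : set X} :
  K !=set0 -> K `<=` range z -> mcompact d K.
Proof.
move=> [y0 Ky0] Kz I G _ cov; have [i0 _] := cov y0 Ky0.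
have /choice[h Hh] : forall j, exists i, K (z j) -> G i (z j).
  move=> j; case: (pselect (K (z j))) => [/cov[i Gi]|nK]; first by exists i.
  by exists i0 => /nK.
by exists N, h => x Kx; have [j _ zj] := Kz x Kx; exists j; rewrite -zj; apply: Hh; rewrite zj.
Qed.

Lemma mcompact_net {K : set X} r : mcompact d K -> 0 < r ->
  exists N (x : 'I_N -> X), (forall j, K (x j)) /\
    forall a, K a -> exists j, d a (x j) < r.
Proof.
move=> cK r0.
have [n [h cover]] := cK {a : X | K a} (fun a => [set y | d (sval a) y < r])
  (fun=> mopen_ball _ _) (fun a Ka => ex_intro _ (exist _ a Ka) (ball_center _ r0)).
exists n, (fun j => sval (h j)); split=> [j|a /cover[j]]; first exact: svalP.
by exists j; rewrite metricC.
Qed.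

Lemma mcompact_bounded {K : set X} x : mcompact d K ->
  exists M, forall a, K a -> d x a <= M.
Proof.
move=> cK; have [n [h cover]] := cK nat (fun i => [set y | d x y < i%:R])
  (fun=> mopen_ball _ _)
  (fun a _ => ex_intro (fun i : nat => d x a < i%:R) _ (archi_boundP (metric_ge0 x a))).
exists (\max_(j < n) h j)%N%:R => a /cover[j /= xa].
by rewrite ltW // (lt_le_trans xa) // ler_nat (leq_bigmax j).
Qed.

(* Otherwise the sets [{u < t}], [t < c] with [c] the supremum of [u] on the
   ball, together with the complement of the ball, cover [C]; a finite
   subcover bounds [u] on the ball by some [t < c]. *)
Lemma usc_ball_max {C : set X} {u : X -> R} x r : mcompact d C -> usc d u ->
  (forall y, 0 < u y -> C y) -> (forall y, 0 <= u y <= 1) -> 0 <= r ->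
  exists2 s, d x s <= r & forall y, d x y <= r -> u y <= u s.
Proof.
move=> cC uu Csupp u01 r0; apply: contrapT => nomax.
pose S := [set u y | y in [set y | d x y <= r]].
have S_ub : has_ubound S by exists 1 => _ [y _ <-]; case/andP: (u01 y).
have lt_sup s : d x s <= r -> u s < sup S.
  move=> xs; rewrite lt_neqAle ub_le_sup //; last by exists s.
  rewrite andbT; apply/eqP => us; apply: nomax; exists s => // y xy.
  by rewrite us ub_le_sup //; exists y.
set c := sup S in lt_sup.
have c0 : 0 < c.
  by apply: le_lt_trans (lt_sup x _); [case/andP: (u01 x)|rewrite metric_xx].
pose G (o : option R) := if o is Some t then [set y | u y < t < c]
                         else [set y | r < d x y].
have oG o : mopen d (G o).
  case: o => [t|] y /=; last first.
    by move=> ry; exists (d x y - r) => [|z yz /=]; [rewrite subr_gt0|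
      have := metric_triangle x z y; rewrite (metricC z); lra].
  case/andP=> uyt tc; have [e e0 He] := uu y t uyt.
  by exists e => // z /He /= ->.
have cov y : C y -> exists o, G o y.
  move=> _; have [ry|yr] := ltP r (d x y); first by exists None.
  by exists (Some ((u y + c) / 2)); have := lt_sup y yr; rewrite /= => ?; apply/andP; split; lra.
have [n [h hcov]] := cC _ G oG cov.
pose g j := odflt 0 (h j).
have mc : \big[Num.max/0]_(j | g j < c) g j < c by apply: bigmax_lt.
suff : c <= \big[Num.max/0]_(j | g j < c) g j by rewrite leNgt mc.
apply: sup_le_ge0 => [_ [y xy <-]|]; last exact: bigmax_ge_id.
have [uy0|/Csupp/hcov[j]] := leP (u y) 0; first exact: le_trans uy0 (bigmax_ge_id _ _ _ _).
rewrite /G; case E: (h j) => [t|] /=; last by rewrite ltNge xy.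
case/andP=> uyt tc; apply: le_trans (ltW uyt) _.
by have := @le_bigmax_cond _ _ _ 0 j (fun j => g j < c) g; rewrite /g E; apply.
Qed.

Lemma ball_nonempty x {r} : 0 < r -> [set y | d x y < r] !=set0.
Proof. by exists x; apply: ball_center. Qed.

Lemma mopen_box {U V : set X} : mopen d U -> mopen d V -> pair_open d (U `*` V).
Proof.
move=> oU oV p [Up Vp]; have [e1 e10 H1] := oU _ Up; have [e2 e20 H2] := oV _ Vp.
exists (Num.min e1 e2) => [|q]; first by rewrite lt_min e10 e20.
by rewrite !lt_min => /andP[q1 _] /andP[_ q2]; split; [apply: H1|apply: H2].
Qed.

Lemma prod_open_ball {N} (p : 'I_N -> X) r :
  prod_open d N [set z | forall i, d (p i) (z i) < r].
Proof.
move=> z /= pz; exists (\big[Num.min/1]_i (r - d (p i) (z i))).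
  by apply: lt_bigmin => // i _; rewrite subr_gt0.
move=> y zy i; have := zy i; have := bigmin_le 1 i (fun i => r - d (p i) (z i)).
by have := metric_triangle (p i) (z i) (y i); lra.
Qed.

Lemma prod_ball_nonempty {N} (p : 'I_N -> X) {r} : 0 < r ->
  [set z | forall i, d (p i) (z i) < r] !=set0.
Proof. by exists p => i; apply: ball_center. Qed.

End MetricSpace.

(** * Transitivity, weak mixing and finite products *)

Lemma Furstenberg_family_nonempty (A : set (set nat)) S :
  Furstenberg_family A -> A S -> S !=set0.
Proof. by case=> A0 _ AS; apply/set0P/eqP => S0; apply: A0; rewrite -S0. Qed.

Section Iterates.
Context {T : Type} (f : T -> T).

Lemma iter_prodmap N n (x : 'I_N -> T) :
  iter n (prodmap f N) x = fun i => iter n f (x i).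
Proof. by elim: n => [|n IH] //; rewrite iterS IH. Qed.

Lemma iter_pairmap n (p : T * T) :
  iter n (fun p => (f p.1, f p.2)) p = (iter n f p.1, iter n f p.2).
Proof. by elim: n => [|n IH]; [case: p|rewrite iterS IH]. Qed.

Lemma iter_image n (K : set T) : iter n (fun K => f @` K) K = iter n f @` K.
Proof. by elim: n => [|n IH]; rewrite ?image_id //= IH image_comp. Qed.

End Iterates.

Definition catf {T : Type} {N1 N2 : nat} (x : 'I_N1 -> T) (y : 'I_N2 -> T) :
    'I_(N1 + N2) -> T :=
  fun i => match fintype.split i with inl j => x j | inr k => y k end.

Lemma catf_lshift {T : Type} N1 N2 (x : 'I_N1 -> T) (y : 'I_N2 -> T) j :
  catf x y (lshift N2 j) = x j.
Proof. by rewrite /catf (unsplitK (inl j)). Qed.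

Lemma catf_rshift {T : Type} N1 N2 (x : 'I_N1 -> T) (y : 'I_N2 -> T) k :
  catf x y (rshift N1 k) = y k.
Proof. by rewrite /catf (unsplitK (inr k)). Qed.

Lemma catf_ind N1 N2 (P : 'I_(N1 + N2) -> Prop) :
  (forall j, P (lshift N2 j)) -> (forall k, P (rshift N1 k)) -> forall i, P i.
Proof. by move=> Pl Pr i; rewrite -(splitK i); case: fintype.split. Qed.

Lemma catfP {T : Type} (P : T -> Prop) {N1 N2} {x : 'I_N1 -> T} {y : 'I_N2 -> T} :
  (forall j, P (x j)) -> (forall k, P (y k)) -> forall i, P (catf x y i).
Proof. by move=> Px Py i; rewrite /catf; case: fintype.split. Qed.

Section Dynamics.
Context {R : realType} {X : Type} {d : X -> X -> R} {f : X -> X}.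
Hypotheses (dm : is_metric d) (fc : mcontinuous d f).

Local Notation ball x r := [set y | d x y < r].

Lemma mopen_preimage {U : set X} : mopen d U -> mopen d (f @^-1` U).
Proof.
move=> oU x Ufx; have [e e0 He] := oU _ Ufx; have [dl dl0 Hdl] := fc x e e0.
by exists dl => // y /Hdl /He.
Qed.

Lemma mopen_preimage_iter k {U : set X} : mopen d U -> mopen d (iter k f @^-1` U).
Proof. by elim: k U => [|k IH] U // /mopen_preimage/IH. Qed.

(* Hitting times into an open set missing [f @` setT] can only be [0], which
   forces [X] to be a single point (through two disjoint balls). *)
Lemma transitive_open_meets_image {V : set X} :
  A_transitive (mopen d) f [set S | S !=set0] -> mopen d V -> V !=set0 ->
  exists x, V (f x).
Proof.
move=> T oV [p Vp]; apply: contrapT => noimg.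
have all_p x : x = p.
  apply: contrapT => /(metric_gt0 dm) s0; set s := d x p in s0.
  have s20 : 0 < s / 2 by lra.
  have [[|n] [y /= xy [Vy py]]] := T _ (V `&` ball p (s / 2))
    (mopen_ball dm x _) (mopenI oV (mopen_ball dm p _))
    (ball_nonempty dm x s20) (ex_intro _ p (conj Vp (ball_center dm p s20))).
    by have := metric_triangle dm x y p; rewrite (metricC dm y) -/s; lra.
  by apply: noimg; exists (iter n f y).
by apply: noimg; exists p; rewrite (all_p (f p)).
Qed.

Lemma transitive_preimage_iter_nonempty k {V : set X} :
  A_transitive (mopen d) f [set S | S !=set0] -> mopen d V -> V !=set0 ->
  iter k f @^-1` V !=set0.
Proof.
move=> T; elim: k V => [|k IH] V oV nV //.
have [y fy] := IH _ (mopen_preimage oV) (transitive_open_meets_image T oV nV).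
by exists y.
Qed.

(* Transitivity of [f \x f] from the diagonal boxes [U \x U] to the boxes
   [V \x W]. *)
Definition A_bitransitive (A : set (set nat)) :=
  forall U V W, mopen d U -> mopen d V -> mopen d W ->
    U !=set0 -> V !=set0 -> W !=set0 -> A (Nset f U V `&` Nset f U W).

Lemma bitransitive_transitive {A : set (set nat)} :
  A_bitransitive A -> A_transitive (mopen d) f A.
Proof. by move=> bt U V oU oV nU nV; rewrite -(setIid (Nset f U V)); apply: bt. Qed.

Lemma bitransitive_nonempty A : Furstenberg_family A ->
  A_bitransitive A -> A_bitransitive [set S | S !=set0].
Proof. by move=> FA bt U V W *; apply: Furstenberg_family_nonempty FA (bt U V W _ _ _ _ _ _). Qed.

(* If [k] takes [U1] into [U2] and [n] takes [U1 `&` f^-k U2] both into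
   [f^-1 V1] and into [f^-(k+1) V2], then [n + 1] takes [(x, f^k x')] from
   [U1 \x U2] into [V1 \x V2]. *)
Lemma bitransitive_weakly_mixing :
  A_bitransitive [set S | S !=set0] -> weakly_mixing d f.
Proof.
move=> bt; have T := bitransitive_transitive bt.
move=> W1 W2 oW1 oW2 [p Wp] [q Wq].
have [e1 e10 H1] := oW1 p Wp; have [e2 e20 H2] := oW2 q Wq.
have [k [x0 Ux0 Ukx0]] := T _ _ (mopen_ball dm p.1 e1) (mopen_ball dm p.2 e1)
  (ball_nonempty dm _ e10) (ball_nonempty dm _ e10).
pose U := ball p.1 e1 `&` iter k f @^-1` ball p.2 e1.
have [n [[x [Ux _] V1x] [x' [_ Ukx'] V2x']]] := bt U (f @^-1` ball q.1 e2)
  (iter k.+1 f @^-1` ball q.2 e2)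
  (mopenI (mopen_ball dm _ _) (mopen_preimage_iter _ (mopen_ball dm _ _)))
  (mopen_preimage (mopen_ball dm _ _)) (mopen_preimage_iter _ (mopen_ball dm _ _))
  (ex_intro _ x0 (conj Ux0 Ukx0))
  (transitive_open_meets_image T (mopen_ball dm _ _) (ball_nonempty dm _ e20))
  (transitive_preimage_iter_nonempty _ T (mopen_ball dm _ _) (ball_nonempty dm _ e20)).
exists n.+1; split => //; exists (x, iter k f x'); first exact: H1.
rewrite iter_pairmap; apply: H2 => //=.
by move: V2x' => /=; rewrite -!iterD addnC.
Qed.

Lemma weakly_mixing_Nset_bigcap (I : eqType) (Us Vs : I -> set X) (s : seq I) :
  weakly_mixing d f ->
  (forall i, [/\ mopen d (Us i), mopen d (Vs i), Us i !=set0 & Vs i !=set0]) ->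
  X -> exists U V, [/\ mopen d U, mopen d V, U !=set0, V !=set0 &
    forall n, Nset f U V n -> forall i, i \in s -> Nset f (Us i) (Vs i) n].
Proof.
move=> wm UVs x0; elim: s => [|i s [U [V [oU oV nU nV UV]]]].
  by exists setT, setT; split=> //; [exact: mopenT|exact: mopenT|exists x0|exists x0].
have [oUi oVi [u Uu] [v Vv]] := UVs i; case: nU nV => [x Ux] [y Vy].
have [k [_ [[a b] [Ua Va] /=]]] := wm _ _ (mopen_box oU oV) (mopen_box oUi oVi)
  (ex_intro _ (x, y) (conj Ux Vy)) (ex_intro _ (u, v) (conj Uu Vv)).
rewrite iter_pairmap => -[Uka Vkb].
exists (U `&` iter k f @^-1` Us i), (V `&` iter k f @^-1` Vs i); split.
- exact/(mopenI oU)/mopen_preimage_iter.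
- exact/(mopenI oV)/mopen_preimage_iter.
- by exists a.
- by exists b.
move=> n [a' [Ua' Uka'] [Va' Vka']] j; rewrite inE => /predU1P[->|js].
  by exists (iter k f a') => //; rewrite -iterD addnC iterD.
by apply: UV js; exists a'.
Qed.

Lemma weakly_mixing_prod_transitive A N : Furstenberg_family A ->
  weakly_mixing d f -> A_transitive (mopen d) f A -> (0 < N)%N ->
  A_transitive (prod_open d N) (prodmap f N) A.
Proof.
move=> [_ FA] wm At N0 W1 W2 oW1 oW2 [x Wx] [y Wy].
have [e1 e10 H1] := oW1 x Wx; have [e2 e20 H2] := oW2 y Wy.
have [U [V [oU oV nU nV UV]]] := weakly_mixing_Nset_bigcap _
  (fun j => ball (x j) e1) (fun j => ball (y j) e2) (enum 'I_N) wm
  (fun j => And4 (mopen_ball dm _ _) (mopen_ball dm _ _)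
                 (ball_nonempty dm _ e10) (ball_nonempty dm _ e20)) (x (Ordinal N0)).
apply: FA (At U V oU oV nU nV) _ => n /UV Nn.
have /choice[z hz] j : exists a, d (x j) a < e1 /\ d (y j) (iter n f a) < e2.
  by have [a ? ?] := Nn j (mem_enum _ _); exists a.
exists z; first by apply: H1 => j; case: (hz j).
by rewrite iter_prodmap; apply: H2 => j; case: (hz j).
Qed.

End Dynamics.

Arguments A_bitransitive {R X} d f A.

(** * The hyperspace of compact sets *)

Lemma ord_add_gt0 {N1} N2 (j : 'I_N1) : (0 < N1 + N2)%N.
Proof. by rewrite ltn_addr // (leq_ltn_trans (leq0n j) (ltn_ord j)). Qed.

Section Hyperspace.
Context {R : realType} {X : Type} {d : X -> X -> R} {f : X -> X}.
Hypothesis dm : is_metric d.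

Lemma Kspace_range N (z : 'I_N -> X) : (0 < N)%N -> Kspace d (range z).
Proof.
move=> N0; have nz : range z !=set0 by exists (z (Ordinal N0)), (Ordinal N0).
by split=> //; apply: mcompact_finite nz (@subset_refl _ _).
Qed.

Lemma Kspace_bounded {K L : set X} : Kspace d K -> Kspace d L ->
  exists M, forall p, K p -> exists2 q, L q & d p q <= M.
Proof.
move=> [_ cK] [[l Ll] _]; have [M KM] := mcompact_bounded dm l cK.
by exists M => p Kp; exists l; rewrite // metricC //; apply: KM.
Qed.

Lemma hausdorff_net_le {N} {K : set X} {p z : 'I_N -> X} {r} : 0 < r ->
  (forall i, K (p i)) -> (forall a, K a -> exists i, d a (p i) < r) ->
  (forall i, d (p i) (z i) < r) -> hausdorff d K (range z) <= 2 * r.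
Proof.
move=> r0 Kp pnet pz; apply: (hausdorff_le (metric_ge0 dm)); first lra.
  move=> a /pnet[i ai]; exists (z i); first by exists i.
  by have := metric_triangle dm a (p i) (z i); have := pz i; lra.
move=> _ [i _ <-]; exists (p i) => //; rewrite metricC //.
by have := pz i; lra.
Qed.

Lemma prod_transitive_hyperspace_transitive A : Furstenberg_family A ->
  (forall N, (0 < N)%N -> A_transitive (prod_open d N) (prodmap f N) A) ->
  A_transitive (sub_open (Kspace d) (hausdorff d)) (fun K => f @` K) A.
Proof.
move=> [_ FA] prodT UU VV [sU oU] [sV oV] [K UK] [L VL].
have [e1 e10 He1] := oU K UK; have [e2 e20 He2] := oV L VL.
have [r [r0 r1 r2]] := common_radius e10 e20.
have [[k0 Kk0] cK] := sU K UK; have [[l0 Ll0] cL] := sV L VL.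
have [N1 [x [Kx xnet]]] := mcompact_net dm r cK r0.
have [N2 [y [Ly ynet]]] := mcompact_net dm r cL r0.
have [j0 _] := xnet k0 Kk0; have N0 := ord_add_gt0 N2 j0.
pose p : 'I_(N1 + N2) -> X := catf x (fun=> k0).
pose q : 'I_(N1 + N2) -> X := catf (fun=> l0) y.
have pnet a : K a -> exists i, d a (p i) < r.
  by move=> /xnet[j ?]; exists (lshift N2 j); rewrite /p catf_lshift.
have qnet a : L a -> exists i, d a (q i) < r.
  by move=> /ynet[k ?]; exists (rshift N1 k); rewrite /q catf_rshift.
have AN := prodT _ N0 _ _
  (prod_open_ball dm p r) (prod_open_ball dm q r)
  (prod_ball_nonempty dm p r0) (prod_ball_nonempty dm q r0).
apply: FA AN _.
move=> n [z /= pz]; rewrite iter_prodmap => /= qz.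
exists (range z).
  apply: He1; first exact: Kspace_range N0.
  apply: le_lt_trans (hausdorff_net_le r0 (catfP K Kx (fun=> Kk0)) pnet pz) _; lra.
rewrite iter_image image_comp; apply: He2; first exact: Kspace_range N0.
apply: le_lt_trans (hausdorff_net_le r0 (catfP L (fun=> Ll0) Ly) qnet qz) _; lra.
Qed.

Lemma sub_open_Kspace_inside (U : set X) :
  sub_open (Kspace d) (hausdorff d)
    [set K | Kspace d K /\ exists2 e, 0 < e & forall a b, K a -> d a b < e -> U b].
Proof.
split=> [K []//|K [KK [e e0 KU]]]; exists (e / 2) => [|L KL KLe]; first lra.
split=> //; exists (e / 2) => [|b c Lb bc]; first lra.
have [M LM] := Kspace_bounded KL KK; rewrite hausdorffC in KLe.
have [a Ka ba] := hausdorff_lt (metric_ge0 dm) LM KLe Lb.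
by apply: (KU a) => //; have := metric_triangle dm a b c; rewrite (metricC dm a b); lra.
Qed.

Lemma sub_open_Kspace_meets {V : set X} : mopen d V ->
  sub_open (Kspace d) (hausdorff d) [set K | Kspace d K /\ K `&` V !=set0].
Proof.
move=> oV; split=> [K []//|K [KK [b [Kb Vb]]]].
have [r r0 rV] := oV b Vb; exists r => // L KL KLr; split=> //.
have [M KM] := Kspace_bounded KK KL.
have [c Lc bc] := hausdorff_lt (metric_ge0 dm) KM KLr Kb.
by exists c; split=> //; apply: rV.
Qed.

Lemma hyperspace_transitive_bitransitive A : Furstenberg_family A ->
  A_transitive (sub_open (Kspace d) (hausdorff d)) (fun K => f @` K) A ->
  A_bitransitive d f A.
Proof.
move=> [_ FA] KT U V W oU oV oW [u Uu] [v Vv] [w Ww].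
have [e e0 eU] := oU u Uu.
pose vw (i : 'I_2) := if i == ord0 then v else w.
have Kvw : Kspace d (range vw) by apply: Kspace_range.
apply: FA (KT _ _ (sub_open_Kspace_inside U)
  (sub_openI (sub_open_Kspace_meets oV) (sub_open_Kspace_meets oW)) _ _) _.
- exists (range (fun _ : 'I_1 => u)); split; first exact: Kspace_range.
  by exists e => // _ b [i _ <-]; apply: eU.
- by exists (range vw); split; split=> //; [exists v; split=> //; exists ord0
                                           |exists w; split=> //; exists ord_max].
move=> n [K [_ [e' e'0 KU]]]; rewrite iter_image.
move=> [[_ [_ [[a Ka <-] Va]]] [_ [_ [[b Kb <-] Wb]]]].
by split; [exists a|exists b] => //; [apply: (KU a)|apply: (KU b)]; rewrite ?metric_xx.
Qed.

End Hyperspace.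

(** * Fuzzy sets *)

Lemma I01_gt0 {R : realType} {a : R} : I01 a -> a != 0 -> 0 < a.
Proof. by case/andP=> a0 _ a_neq0; rewrite lt_def a_neq0. Qed.

Lemma I01_0 {R : realType} : I01 (0 : R). Proof. by rewrite /I01 lexx ler01. Qed.
Lemma I01_1 {R : realType} : I01 (1 : R). Proof. by rewrite /I01 lexx ler01. Qed.

Section Levels.
Context {R : realType} {X : Type} {d : X -> X -> R}.
Hypothesis dm : is_metric d.

Lemma level0E (u : X -> R) : level d u 0 = mclosure d [set x | 0 < u x].
Proof. by rewrite /level eqxx. Qed.

Lemma levelE (u : X -> R) a : a != 0 -> level d u a = [set x | a <= u x].
Proof. by rewrite /level => /negbTE->. Qed.

Lemma mclosure_self (S : set X) x : S x -> mclosure d S x.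
Proof. by move=> Sx e e0; exists x; rewrite ?metric_xx. Qed.

Lemma sendgE (u : X -> R) p : (forall x, 0 <= u x) ->
  sendg d u p <-> I01 p.2 /\ level d u p.2 p.1.
Proof.
case: p => a t u0 /=; have [-> /=|t0] := eqVneq t 0.
  by split=> [[[]]|[I0 la]] //; split=> //; split.
rewrite levelE //=; split=> [[[]]|[It ta]] //; split=> //.
by rewrite level0E; apply: mclosure_self; apply: lt_le_trans (I01_gt0 It t0) ta.
Qed.

Lemma level_sub0 {g v : X -> R} {a x} : I01 a ->
  (forall y, 0 < g y -> 0 < v y) -> level d g a x -> level d v 0 x.
Proof.
move=> Ia gv; rewrite !level0E; have [->|a0] := eqVneq a 0.
  by rewrite level0E => gx e /gx[y /gv]; exists y.
rewrite levelE // => /= ax; apply/mclosure_self/gv.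
exact: lt_le_trans (I01_gt0 Ia a0) ax.
Qed.

Lemma level_eq1 (u : X -> R) p a : u p = 1 -> I01 a -> level d u a p.
Proof.
move=> up1 Ia; have [->|a0] := eqVneq a 0.
  by rewrite level0E; apply: mclosure_self; rewrite /= up1.
by rewrite levelE //= up1; case/andP: Ia.
Qed.

Lemma fuzzy_eq1 {u : X -> R} : fuzzy d u -> exists p, u p = 1.
Proof.
case=> u01 _ _ [p]; rewrite levelE ?oner_eq0 //= => up.
by exists p; apply/eqP; rewrite eq_le up andbT; case/andP: (u01 p).
Qed.

Lemma dbar_same_level (a b : X) (t : R) : dbar d (a, t) (b, t) = d a b.
Proof. by rewrite /dbar subrr normr0; apply/max_idPl/metric_ge0. Qed.

Lemma dbar_ge0 (p q : X * R) : 0 <= dbar d p q.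
Proof. by rewrite /dbar le_max metric_ge0. Qed.

End Levels.

Section Homeomorphisms.
Context {R : realType} {xi : R -> R}.
Hypothesis hxi : incr_homeo xi.

Lemma incr_homeo0 : xi 0 = 0.
Proof.
case: hxi => mono xi01 onto _; have [a Ia xa] := onto 0 I01_0.
have [a0|a0] := eqVneq a 0; first by move: xa; rewrite a0.
have := mono 0 a I01_0 Ia (I01_gt0 Ia a0); rewrite xa => xi0_lt0.
by case/andP: (xi01 0 I01_0) => /le_lt_trans/(_ xi0_lt0); rewrite ltxx.
Qed.

Lemma incr_homeo1 : xi 1 = 1.
Proof.
case: hxi => mono xi01 onto _; have [a Ia xa] := onto 1 I01_1.
have [a1|a1] := eqVneq a 1; first by move: xa; rewrite a1.
have a_lt1 : a < 1 by case/andP: Ia => _; rewrite le_eqVlt (negbTE a1).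
have := mono a 1 Ia I01_1 a_lt1; rewrite xa => xi1_gt1.
by case/andP: (xi01 1 I01_1) => _ /(lt_le_trans xi1_gt1); rewrite ltxx.
Qed.

Lemma incr_homeo_gt0 a : I01 a -> 0 < a -> 0 < xi a.
Proof. by case: hxi => mono _ _ _ Ia a0; rewrite -incr_homeo0; apply: mono => //; apply: I01_0. Qed.

End Homeomorphisms.

Lemma incr_homeo_id {R : realType} : incr_homeo (@id R).
Proof. by split=> // [b Ib|a Ia e e0]; [exists b|exists e]. Qed.

(* The fuzzy set with weight [c j] at the point [z j] (the largest one when
   points coincide) and [0] elsewhere. *)
Definition fin_fuzzy {R : realType} {X : Type} {N} (z : 'I_N -> X)
    (c : 'I_N -> R) (y : X) : R :=
  \big[Num.max/0]_(j | `[< z j = y >]) c j.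

Section FiniteFuzzy.
Context {R : realType} {X : Type} {d : X -> X -> R} {N : nat} {c : 'I_N -> R}.
Hypotheses (dm : is_metric d) (c01 : forall j, 0 <= c j <= 1).

Lemma fin_fuzzy_ge0 (z : 'I_N -> X) y : 0 <= fin_fuzzy z c y.
Proof. exact: bigmax_ge_id. Qed.

Lemma fin_fuzzy_le1 (z : 'I_N -> X) y : fin_fuzzy z c y <= 1.
Proof. by apply: bigmax_le => // j _; case/andP: (c01 j). Qed.

Lemma fin_fuzzy_ge (z : 'I_N -> X) j : c j <= fin_fuzzy z c (z j).
Proof. by apply: le_bigmax_cond; apply/asboolP. Qed.

Lemma fin_fuzzy_gt0 {z : 'I_N -> X} {y} : 0 < fin_fuzzy z c y ->
  exists2 j, z j = y & fin_fuzzy z c y = c j.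
Proof.
case/bigmax_gtP=> [|[j zj _]]; first by rewrite ltxx.
have [i /asboolP zi fz] := eq_bigmax j (fun i => `[< z i = y >]) c zj
  (fun i _ => proj1 (andP (c01 i))).
by exists i; first exact: zi.
Qed.

Lemma fin_fuzzy_out (z : 'I_N -> X) y : (forall j, z j <> y) -> fin_fuzzy z c y = 0.
Proof. by move=> zy; apply: big_pred0 => j; apply/asboolP/zy. Qed.

Lemma fin_fuzzy_isolated (z : 'I_N -> X) y : exists2 e, 0 < e &
  forall y', d y y' < e -> y' = y \/ fin_fuzzy z c y' = 0.
Proof.
exists (\big[Num.min/1]_(j | 0 < d y (z j)) d y (z j)); first exact: lt_bigmin.
move=> y' yy'; have [->|y'y] := pselect (y' = y); [by left|right].
apply: fin_fuzzy_out => j zj.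
have dyz : 0 < d y (z j) by rewrite zj; exact: metric_gt0 dm _ _ (fun e => y'y (esym e)).
have := @bigmin_le_cond _ _ _ 1 j (fun j => 0 < d y (z j)) (fun j => d y (z j)) dyz.
by move: yy'; rewrite -zj; lra.
Qed.

Lemma fin_fuzzy_usc (z : 'I_N -> X) : usc d (fin_fuzzy z c).
Proof.
move=> y t yt; have [e e0 yiso] := fin_fuzzy_isolated z y.
by exists e => // y' /yiso[->|->] //; apply: le_lt_trans yt; apply: fin_fuzzy_ge0.
Qed.

Lemma fin_fuzzy_supp (z : 'I_N -> X) :
  mclosure d [set x | 0 < fin_fuzzy z c x] `<=` range z.
Proof.
move=> y ycl; have [e e0 yiso] := fin_fuzzy_isolated z y.
have [y' /= y'pos yy'] := ycl e e0; have [j zj _] := fin_fuzzy_gt0 y'pos.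
exists j => //; case: (yiso y' yy') => [<-//|y'0].
by move: y'pos; rewrite y'0 ltxx.
Qed.

Lemma fin_fuzzy_fuzzy (z : 'I_N -> X) : (exists j, c j = 1) -> fuzzy d (fin_fuzzy z c).
Proof.
move=> [j cj1]; have zj1 : 1 <= fin_fuzzy z c (z j) by rewrite -cj1 fin_fuzzy_ge.
split=> [y|||]; first by rewrite /I01 fin_fuzzy_ge0 fin_fuzzy_le1.
- exact: fin_fuzzy_usc.
- rewrite level0E; apply: (mcompact_finite z) _ (fin_fuzzy_supp z).
  by exists (z j); apply: (mclosure_self dm); apply: lt_le_trans zj1.
- by exists (z j); rewrite levelE ?oner_eq0.
Qed.

Lemma zadeh_fin_fuzzy (f : X -> X) (z : 'I_N -> X) :
  zadeh f (fin_fuzzy z c) = fin_fuzzy (f \o z) c.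
Proof.
apply: funext => y; rewrite /zadeh.
case: (pselect (exists x, f x = y)) => [[x fx]|noimg]; last first.
  by rewrite asboolF // fin_fuzzy_out // => j zj; apply: noimg; exists (z j).
rewrite asboolT; last by exists x.
have S_ub : has_ubound [set fin_fuzzy z c a | a in f @^-1` [set y]].
  by exists 1 => _ [a _ <-]; apply: fin_fuzzy_le1.
apply/eqP; rewrite eq_le; apply/andP; split.
  apply: ge_sup => [|_ [a /= fa <-]]; first by exists (fin_fuzzy z c x), x.
  apply: bigmax_le => [|j /asboolP zj]; first exact: fin_fuzzy_ge0.
  by rewrite -fa -zj; apply: (fin_fuzzy_ge (f \o z)).
have [/fin_fuzzy_gt0[j fzj ->]|le0] := ltP 0 (fin_fuzzy (f \o z) c y).
  by apply: le_trans (fin_fuzzy_ge z j) _; apply: ub_le_sup => //; exists (z j).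
apply: le_trans le0 (le_trans (fin_fuzzy_ge0 z x) _).
by apply: ub_le_sup => //; exists x.
Qed.

Lemma iter_zadeh_fin_fuzzy (f : X -> X) n (z : 'I_N -> X) :
  iter n (zadeh f) (fin_fuzzy z c) = fin_fuzzy (iter n f \o z) c.
Proof. by elim: n => [|n IH] //; rewrite iterS IH zadeh_fin_fuzzy. Qed.

End FiniteFuzzy.

Section FiniteIndicator.
Context {R : realType} {X : Type} {d : X -> X -> R} {N : nat} (z : 'I_N -> X).
Hypothesis dm : is_metric d.

Let one01 (j : 'I_N) : 0 <= (fun=> 1 : R) j <= 1.
Proof. by rewrite /= ler01 lexx. Qed.

Lemma fin_indicator_fuzzy : (0 < N)%N -> fuzzy d (fin_fuzzy z (fun=> 1 : R)).
Proof. by move=> N0; apply: (fin_fuzzy_fuzzy dm one01); exists (Ordinal N0). Qed.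

Lemma fin_indicator_ge1 j : 1 <= fin_fuzzy z (fun=> 1 : R) (z j).
Proof. exact: fin_fuzzy_ge. Qed.

Lemma fin_indicator_gt0 y : 0 < fin_fuzzy z (fun=> 1 : R) y -> exists j, z j = y.
Proof. by case/(fin_fuzzy_gt0 one01) => j zj _; exists j. Qed.

End FiniteIndicator.

Lemma iter_zadeh_gt {R : realType} {X : Type} (f : X -> X) n (u : X -> R) b t :
  0 <= t -> t < iter n (zadeh f) u b -> exists2 a, iter n f a = b & t < u a.
Proof.
move=> t0; elim: n b => [|n IH] b /=; first by exists b.
rewrite /zadeh; case: (pselect (exists y, f y = b)) => [[y fy]|noimg]; last first.
  by rewrite asboolF // => /(le_lt_trans t0); rewrite ltxx.
rewrite asboolT; last by exists y.
case/sup_gt => [|_ [y' /= fy' <-] /IH[a ay' ta]]; first by exists (iter n (zadeh f) u y), y.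
by exists a; rewrite //= ay'.
Qed.

Definition weighted_net {R : realType} {X : Type} (d : X -> X -> R) (u : X -> R)
    (r : R) {N} (s : 'I_N -> X) (c : 'I_N -> R) :=
  [/\ forall j, 0 <= c j <= 1,
      forall a, 0 < u a -> exists2 j, d a (s j) < r & u a <= c j,
      forall j, c j <= u (s j) & exists j, c j = 1].

Section WeightedNets.
Context {R : realType} {X : Type} {d : X -> X -> R}.
Hypothesis dm : is_metric d.

(* Each weight is the maximum of [u] on a closed ball of radius [r / 2] around
   a point of an [r / 2]-net of the support of [u]. *)
Lemma fuzzy_weighted_net {u r} : fuzzy d u -> 0 < r ->
  exists N (s : 'I_N -> X) c, weighted_net d u r s c.
Proof.
move=> [u01 uusc cu0 [a1 +]] r0; rewrite levelE ?oner_eq0 //= => ua1.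
have r20 : 0 < r / 2 by lra.
have [N [x [_ xnet]]] := mcompact_net dm (r / 2) cu0 r20.
have supp y : 0 < u y -> level d u 0 y.
  by rewrite level0E => ?; apply: (mclosure_self dm).
have /choice[s smax] j : exists s, d (x j) s <= r / 2 /\
    forall y, d (x j) y <= r / 2 -> u y <= u s.
  by have [s ? ?] := usc_ball_max dm (x j) (r / 2) cu0 uusc supp u01 (ltW r20); exists s.
have near_max a : 0 < u a -> exists2 j, d a (s j) < r & u a <= u (s j).
  move=> /supp/xnet[j xa]; have [xs sM] := smax j; exists j.
    by have := metric_triangle dm a (x j) (s j); lra.
  by apply: sM; rewrite metricC // ltW.
exists N, s, (u \o s); split=> // [j|]; first exact: u01.
have [j _ u1] := near_max a1 (lt_le_trans ltr01 ua1); exists j.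
by apply/eqP; rewrite eq_le (le_trans ua1 u1) andbT; case/andP: (u01 (s j)).
Qed.

(* The weights are shared because one fuzzy set [fin_fuzzy z c] has to be
   close to [u] and, after [n] steps, to [v]. *)
Lemma weighted_net_cat {u v r N1 N2} {s : 'I_N1 -> X} {a} {t : 'I_N2 -> X} {b} :
  weighted_net d u r s a -> weighted_net d v r t b ->
  exists p q, weighted_net d u r p (catf a b) /\ weighted_net d v r q (catf a b).
Proof.
move=> [a01 snet sa [j1 a1]] [b01 tnet tb [k1 b1]].
have ab01 : forall i, 0 <= catf a b i <= 1 := catfP (fun x => 0 <= x <= 1) a01 b01.
exists (catf s (fun=> s j1)), (catf (fun=> t k1) t); split; split=> //.
- by move=> x /snet[j ? ?]; exists (lshift N2 j); rewrite !catf_lshift.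
- apply: catf_ind => [j|k]; rewrite !(catf_lshift, catf_rshift) //.
  by apply: le_trans (sa j1); rewrite a1; case/andP: (b01 k).
- by exists (lshift N2 j1); rewrite catf_lshift.
- by move=> x /tnet[k ? ?]; exists (rshift N1 k); rewrite !catf_rshift.
- apply: catf_ind => [j|k]; rewrite !(catf_lshift, catf_rshift) //.
  by apply: le_trans (tb k1); rewrite b1; case/andP: (a01 j).
- by exists (lshift N2 j1); rewrite catf_lshift.
Qed.

Lemma weighted_net_gt0 {u r N} {s : 'I_N -> X} {c} : weighted_net d u r s c -> (0 < N)%N.
Proof. by case=> _ _ _ [j _]; apply: leq_ltn_trans (leq0n j) (ltn_ord j). Qed.

End WeightedNets.

Section NetEstimates.
Context {R : realType} {X : Type} {d : X -> X -> R} {N : nat}.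
Variables (u : X -> R) (r : R) (s z : 'I_N -> X) (c : 'I_N -> R).
Hypotheses (dm : is_metric d) (u_fuzzy : fuzzy d u) (sc : weighted_net d u r s c)
  (sz : forall j, d (s j) (z j) < r).

Let c01 : forall j, 0 <= c j <= 1. Proof. by case: sc. Qed.

Let r_gt0 : 0 < r.
Proof. by case: sc => _ _ _ [j _]; apply: le_lt_trans (sz j); apply: metric_ge0. Qed.

Lemma net_cover {a} : 0 < u a ->
  exists2 j, d a (z j) < 2 * r & u a <= fin_fuzzy z c (z j).
Proof.
case: sc => _ snet _ _ /snet[j sa ac]; exists j.
  by have := metric_triangle dm a (s j) (z j); have := sz j; lra.
exact: le_trans ac (fin_fuzzy_ge _ _).
Qed.

Lemma net_fin_fuzzy_gt0 {y} : 0 < fin_fuzzy z c y ->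
  exists2 j, d y (s j) < r & fin_fuzzy z c y <= u (s j).
Proof.
case: sc => _ _ cs _ /(fin_fuzzy_gt0 c01)[j <- ->]; exists j => //.
by rewrite metricC.
Qed.

Lemma net_level_near {a t} : I01 t -> level d u t a ->
  exists2 j, d a (z j) < 3 * r & level d (fin_fuzzy z c) t (z j).
Proof.
have r0 := r_gt0.
move=> It; have [->|t0] := eqVneq t 0; last first.
  rewrite !levelE //= => ta; have [j az uz] := net_cover (lt_le_trans (I01_gt0 It t0) ta).
  by exists j; [lra|apply: le_trans uz].
rewrite !level0E => /(_ r r0)[a' /= ua' aa']; have [j a'z uz] := net_cover ua'.
exists j; first by have := metric_triangle dm a a' (z j); lra.
by apply: (mclosure_self dm); apply: lt_le_trans uz.
Qed.

Lemma net_level_near_rev {y t} : I01 t -> level d (fin_fuzzy z c) t y ->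
  exists2 j, d y (s j) < 2 * r & level d u t (s j).
Proof.
have r0 := r_gt0.
move=> It; have [->|t0] := eqVneq t 0; last first.
  rewrite !levelE //= => ty.
  have [j ys wu] := net_fin_fuzzy_gt0 (lt_le_trans (I01_gt0 It t0) ty).
  by exists j; [lra|apply: le_trans wu].
rewrite !level0E => /(_ r r0)[y' /= wy' yy']; have [j y's wu] := net_fin_fuzzy_gt0 wy'.
exists j; first by have := metric_triangle dm y y' (s j); lra.
by apply: (mclosure_self dm); apply: lt_le_trans wu.
Qed.

Lemma net_d_inf : d_inf d u (fin_fuzzy z c) <= 3 * r.
Proof.
have r0 := r_gt0.
apply: sup_le_ge0 => [_ [t It <-]|]; last lra.
apply: (hausdorff_le (metric_ge0 dm)); first lra.
  by move=> a /(net_level_near It)[j ? ?]; exists (z j) => //; apply: ltW.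
by move=> y /(net_level_near_rev It)[j ? ?]; exists (s j) => //; apply/ltW; lra.
Qed.

Lemma net_d_0 : d_0 d u (fin_fuzzy z c) <= 3 * r.
Proof.
have r0 := r_gt0.
apply: ge_inf; first by exists 0 => e [/ltW].
split; first lra; exists id; split; [exact: incr_homeo_id| |exact: net_d_inf].
by apply: sup_le_ge0 => [_ [a _ <-]|]; rewrite ?subrr ?normr0; lra.
Qed.

Lemma net_d_S : d_S d u (fin_fuzzy z c) <= 3 * r.
Proof.
have r0 := r_gt0.
have [u0 w0] : (forall x, 0 <= u x) /\ forall x, 0 <= fin_fuzzy z c x.
  by split=> x; [case: u_fuzzy => /(_ x)/andP[]|apply: fin_fuzzy_ge0].
apply: (hausdorff_le (dbar_ge0 dm)) => [|[a t]|[y t]]; first lra.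
  move=> /(sendgE dm _ _ u0)[/= It /(net_level_near It)[j az wz]].
  by exists (z j, t); [apply/(sendgE dm _ _ w0)|rewrite (dbar_same_level dm) ltW].
move=> /(sendgE dm _ _ w0)[/= It /(net_level_near_rev It)[j ys us]].
by exists (s j, t); [apply/(sendgE dm _ _ u0)|rewrite (dbar_same_level dm); lra].
Qed.

Lemma net_d_E : d_E d u (fin_fuzzy z c) <= 3 * r.
Proof.
have r0 := r_gt0.
have endg0 (g : X -> R) x : 0 <= g x -> endg g (x, 0).
  by move=> gx; split=> //; rewrite /I01 lexx ler01.
apply: (hausdorff_le (dbar_ge0 dm)) => [|[a t] [/= It ta]|[y t] [/= It ty]]; first lra.
- have [t0|t0] := eqVneq t 0.
    exists (a, 0); first exact/endg0/fin_fuzzy_ge0.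
    by rewrite t0 (dbar_same_level dm) metric_xx //; lra.
  have /(net_level_near It)[j az] : level d u t a by rewrite levelE.
  by rewrite levelE // => wz; exists (z j, t) => //; rewrite (dbar_same_level dm) ltW.
- have [t0|t0] := eqVneq t 0.
    exists (y, 0); first by apply: endg0; case: u_fuzzy => /(_ y)/andP[].
    by rewrite t0 (dbar_same_level dm) metric_xx //; lra.
  have /(net_level_near_rev It)[j ys] : level d (fin_fuzzy z c) t y by rewrite levelE.
  by rewrite levelE // => us; exists (s j, t) => //; rewrite (dbar_same_level dm); lra.
Qed.

End NetEstimates.

(* The only property of a hyperspace metric [D] used to pass from products
   to fuzzy sets. *)
Definition net_bounded {R : realType} {X : Type} (d : X -> X -> R)
    (D : (X -> R) -> (X -> R) -> R) :=
  forall u r N (s z : 'I_N -> X) c, fuzzy d u -> weighted_net d u r s c ->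
    (forall j, d (s j) (z j) < r) -> D u (fin_fuzzy z c) <= 3 * r.

Section NetBounded.
Context {R : realType} {X : Type} {d : X -> X -> R}.
Hypothesis dm : is_metric d.

Lemma net_bounded_d_inf : net_bounded d (d_inf d).
Proof. by move=> u r N s z c _ sc sz; apply: net_d_inf sc sz. Qed.

Lemma net_bounded_d_0 : net_bounded d (d_0 d).
Proof. by move=> u r N s z c _ sc sz; apply: net_d_0 sc sz. Qed.

Lemma net_bounded_d_S : net_bounded d (d_S d).
Proof. by move=> u r N s z c fu sc sz; apply: net_d_S fu sc sz. Qed.

Lemma net_bounded_d_E : net_bounded d (d_E d).
Proof. by move=> u r N s z c fu sc sz; apply: net_d_E fu sc sz. Qed.

End NetBounded.

Definition levels_near {R : realType} {X : Type} (d : X -> X -> R) (u v : X -> R) r :=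
  forall a t, 0 < t -> t <= u a -> exists2 b, d a b < r & t - r < v b.

(* The only property of a hyperspace metric [D] used to pass from fuzzy sets
   back to [X]. *)
Definition pointwise_controlled {R : realType} {X : Type} (d : X -> X -> R)
    (D : (X -> R) -> (X -> R) -> R) :=
  forall u v, fuzzy d u -> fuzzy d v -> forall r, D u v < r ->
    levels_near d u v r /\ levels_near d v u r.

Definition levels_bounded {R : realType} {X : Type} (d : X -> X -> R) (g h : X -> R) :=
  exists M, forall t, I01 t -> forall x, level d g t x ->
    exists2 y, level d h t y & d x y <= M.

Section PointwiseControl.
Context {R : realType} {X : Type} {d : X -> X -> R}.
Hypothesis dm : is_metric d.

Lemma d_infC (g h : X -> R) : d_inf d g h = d_inf d h g.
Proof. by rewrite /d_inf; congr sup; apply: eq_imagel => t _; apply: hausdorffC. Qed.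

Lemma levels_bounded_compact {g h : X -> R} {C : set X} {p} : mcompact d C ->
  (forall t x, I01 t -> level d g t x -> C x) -> h p = 1 -> levels_bounded d g h.
Proof.
move=> cC gC hp; have [M CM] := mcompact_bounded dm p cC.
exists M => t It x /(gC _ _ It) Cx; exists p; first exact: level_eq1.
by rewrite metricC // CM.
Qed.

Lemma d_inf_lt_level {g h : X -> R} {r t x} :
  levels_bounded d g h -> levels_bounded d h g -> d_inf d g h < r -> I01 t ->
  level d g t x -> exists2 y, level d h t y & d x y < r.
Proof.
move=> [M1 gh] [M2 hg] ghr It gx; pose M := Num.max (Num.max M1 M2) 0.
have [M1M M2M M0] : [/\ M1 <= M, M2 <= M & 0 <= M].
  by rewrite !le_max !lexx !orbT.
have lt_r : hausdorff d (level d g t) (level d h t) < r.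
  apply: le_lt_trans ghr; apply: ub_le_sup; last by exists t.
  exists M => _ [t' It' <-]; apply: (hausdorff_le (metric_ge0 dm)) => // [y|y].
    by move=> /(gh _ It')[z ? ?]; exists z => //; apply: le_trans M1M.
  by move=> /(hg _ It')[z ? ?]; exists z => //; apply: le_trans M2M.
by have [y hy xy] := hausdorff_lt (metric_ge0 dm) (gh t It) lt_r gx; exists y.
Qed.

(* [xi \o v] has the same support as [v], so its levels lie in the compact
   set [level d v 0]. *)
Lemma d_inf_homeo_near {u v : X -> R} {xi : R -> R} {e r : R} :
  fuzzy d u -> fuzzy d v -> incr_homeo xi ->
  (forall a, I01 a -> `|xi a - a| <= e) -> d_inf d u (xi \o v) < r ->
  (forall a t, 0 < t -> t <= u a -> exists2 b, d a b < r & t - e <= v b) /\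
  (forall b t, 0 < t -> t <= v b -> exists2 a, d b a < r & t - e <= u a).
Proof.
move=> fu fv hxi xie uvr.
have [[u01 _ cu _] [v01 _ cv _]] := (fu, fv).
have [[pu pu1] [pv pv1]] := (fuzzy_eq1 fu, fuzzy_eq1 fv).
have xiv_supp y : 0 < xi (v y) -> 0 < v y.
  move=> xv; rewrite lt_def (proj1 (andP (v01 y))) andbT.
  by apply: contraTneq xv => ->; rewrite incr_homeo0 // ltxx.
have uB : levels_bounded d u (xi \o v).
  apply: (levels_bounded_compact (p := pv) cu (fun t x It => level_sub0 dm It (fun _ => id))).
  by rewrite /= pv1 incr_homeo1.
have vB : levels_bounded d (xi \o v) u.
  exact: levels_bounded_compact cv (fun t x It => level_sub0 dm It xiv_supp) pu1.
have [xi_mono xi01 _ _] := hxi.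
split=> [a t t0 ta|b t t0 tb].
  have It : I01 t by rewrite /I01 ltW //=; apply: le_trans ta _; case/andP: (u01 a).
  have /(d_inf_lt_level uB vB uvr It)[b] : level d u t a by rewrite levelE ?gt_eqF.
  rewrite levelE ?gt_eqF //= => tb ab; exists b => //.
  by have := xie _ (v01 b); rewrite ler_norml => /andP[]; lra.
have Ixv := xi01 _ (v01 b); have xv0 := incr_homeo_gt0 hxi _ (v01 b) (lt_le_trans t0 tb).
rewrite d_infC in uvr.
have /(d_inf_lt_level vB uB uvr Ixv)[a] : level d (xi \o v) (xi (v b)) b.
  by rewrite levelE ?gt_eqF //=.
rewrite levelE ?gt_eqF //= => xu ba; exists a => //.
by have := xie _ (v01 b); rewrite ler_norml => /andP[]; lra.
Qed.

Lemma pointwise_controlled_d_inf : pointwise_controlled d (d_inf d).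
Proof.
move=> u v fu fv r uvr.
have id0 (a : R) : I01 a -> `|id a - a| <= 0 by rewrite subrr normr0.
have [near near'] := d_inf_homeo_near (xi := id) (e := 0) fu fv incr_homeo_id id0 uvr.
split=> [a t t0 /(near _ _ t0)[c ac tc]|b t t0 /(near' _ _ t0)[c bc tc]]; exists c => //.
  by have := metric_ge0 dm a c; lra.
by have := metric_ge0 dm b c; lra.
Qed.

Lemma d_0_lt u v r : d_0 d u v < r -> exists xi e, [/\ incr_homeo xi, e < r,
  forall a, I01 a -> `|xi a - a| <= e & d_inf d u (xi \o v) < r].
Proof.
pose E := [set e | 0 < e /\ exists xi, [/\ incr_homeo xi,
  sup [set `|xi a - a| | a in @I01 R] <= e & d_inf d u (xi \o v) <= e]].
have E0 : E !=set0.
  exists (`|d_inf d u v| + 1); split; first by have := normr_ge0 (d_inf d u v); lra.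
  exists id; split; first exact: incr_homeo_id.
    apply: sup_le_ge0 => [_ [a _ <-]|]; rewrite ?subrr ?normr0;
    by have := normr_ge0 (d_inf d u v); lra.
  by have := ler_norm (d_inf d u v); rewrite /=; lra.
case/(inf_lt E0) => e [_ [xi [hxi supe ue]]] er.
exists xi, e; split=> // [a Ia|]; last exact: le_lt_trans ue er.
apply: le_trans supe; apply: ub_le_sup; last by exists a.
exists 1 => _ [b Ib <-]; have [_ xi01 _ _] := hxi.
move: (xi01 b Ib); move: Ib; rewrite /I01 ler_norml => /andP[? ?] /andP[? ?].
by apply/andP; split; lra.
Qed.

Lemma pointwise_controlled_d_0 : pointwise_controlled d (d_0 d).
Proof.
move=> u v fu fv r /d_0_lt[xi [e [hxi er xie uvr]]].
have [near near'] := d_inf_homeo_near fu fv hxi xie uvr.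
split=> [a t t0 /(near _ _ t0)|b t t0 /(near' _ _ t0)] [c dc tc]; exists c => //; lra.
Qed.

Lemma pointwise_controlled_graph (G : (X -> R) -> set (X * R)) :
  (forall u a t, fuzzy d u -> 0 < t -> t <= u a -> G u (a, t)) ->
  (forall u p, G u p -> p.2 <= u p.1) ->
  (forall u v, fuzzy d u -> fuzzy d v ->
     exists M, forall p, G u p -> exists2 q, G v q & dbar d p q <= M) ->
  pointwise_controlled d (fun u v => hausdorff (dbar d) (G u) (G v)).
Proof.
move=> Gin Gle Gbd u v fu fv r uvr.
have near g h : fuzzy d g -> fuzzy d h ->
    hausdorff (dbar d) (G g) (G h) < r -> levels_near d g h r.
  move=> fg fh ghr a t t0 ta; have [M gM] := Gbd _ _ fg fh.
  have [[b s] Gbs] := hausdorff_lt (dbar_ge0 dm) gM ghr (Gin _ _ _ fg t0 ta).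
  have := Gle _ _ Gbs; rewrite /dbar gt_max ltr_norml => /= sb /andP[ab /andP[? ?]].
  by exists b => //; lra.
by split; apply: near => //; rewrite hausdorffC.
Qed.

Lemma pointwise_controlled_d_E : pointwise_controlled d (d_E d).
Proof.
rewrite /d_E; apply: (pointwise_controlled_graph (@endg R X))
  => [u a t [u01 _ _ _] t0 ta|u [a t] []//|u v _ [v01 _ _ _]].
  by split=> //; rewrite /I01 ltW //=; apply: le_trans ta _; case/andP: (u01 a).
exists 1 => -[a t] [/= It _]; exists (a, 0); first by split; [exact: I01_0|case/andP: (v01 a)].
rewrite /dbar /= metric_xx // subr0 ge_max ler01 /=.
by case/andP: It => t0 t1; rewrite ger0_norm.
Qed.

Lemma pointwise_controlled_d_S : pointwise_controlled d (d_S d).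
Proof.
rewrite /d_S; apply: (pointwise_controlled_graph (sendg d))
  => [u a t fu t0 ta|u [a t] [[_ ta] _]//|u v fu fv].
- have [u01 _ _ _] := fu.
  have It : I01 t by rewrite /I01 ltW //=; apply: le_trans ta _; case/andP: (u01 a).
  apply/(sendgE dm) => [x|]; first by case/andP: (u01 x).
  by split=> //=; rewrite levelE ?gt_eqF.
- have [_ _ cu _] := fu; have [p vp1] := fuzzy_eq1 fv.
  have [M uM] := mcompact_bounded dm p cu.
  exists (M + 1) => -[a t] [[/= It _] ua]; exists (p, 0).
    apply/(sendgE dm) => [x|]; first by case: fv => /(_ x)/andP[].
    by split=> /=; [exact: I01_0|exact: (level_eq1 dm _ _ _ vp1 I01_0)].
  have := uM a ua; have := metric_ge0 dm p a; rewrite /dbar /= subr0 ge_max (metricC dm a).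
  by case/andP: It => t0 t1; rewrite ger0_norm // => ? ?; apply/andP; split; lra.
Qed.

End PointwiseControl.

Section FuzzyTransitivity.
Context {R : realType} {X : Type} {d : X -> X -> R} {f : X -> X}.
Hypothesis dm : is_metric d.

Lemma prod_transitive_fuzzy_transitive A D : Furstenberg_family A -> net_bounded d D ->
  (forall N, (0 < N)%N -> A_transitive (prod_open d N) (prodmap f N) A) ->
  A_transitive (sub_open (fuzzy d) D) (zadeh f) A.
Proof.
move=> [_ FA] Dnet prodT UU VV [sU oU] [sV oV] [u Uu] [v Vv].
have [e1 e10 He1] := oU u Uu; have [e2 e20 He2] := oV v Vv.
have [r [r0 r1 r2]] := common_radius e10 e20.
have [N1 [s [a sa]]] := fuzzy_weighted_net dm (sU u Uu) r0.
have [N2 [t [b tb]]] := fuzzy_weighted_net dm (sV v Vv) r0.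
have [p [q [pu qv]]] := weighted_net_cat sa tb.
have [ab01 _ _ ab1] := pu.
have fz z : fuzzy d (fin_fuzzy z (catf a b)) := fin_fuzzy_fuzzy dm ab01 z ab1.
apply: FA (prodT _ (weighted_net_gt0 pu) _ _
  (prod_open_ball dm p r) (prod_open_ball dm q r)
  (prod_ball_nonempty dm p r0) (prod_ball_nonempty dm q r0)) _.
move=> n [z /= pz]; rewrite iter_prodmap => /= qz.
exists (fin_fuzzy z (catf a b)).
  exact: He1 (fz z) (le_lt_trans (Dnet _ _ _ _ _ _ (sU u Uu) pu pz) r1).
rewrite iter_zadeh_fin_fuzzy //.
exact: He2 (fz _) (le_lt_trans (Dnet _ _ _ _ _ _ (sV v Vv) qv qz) r2).
Qed.

(* Fuzzy sets exceeding [1/2] only deep inside [U], and fuzzy sets with a peak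
   above [1/2] deep inside [V]: pointwise control makes both families open,
   and [iter_zadeh_gt] pulls a peak of an iterate back to a point of [U]. *)
Definition fuzzy_inside (U : set X) : set (X -> R) :=
  [set g | fuzzy d g /\ exists e, [/\ 0 < e, e <= 1 / 4 &
     forall a' a, 1 / 2 - e < g a' -> d a' a < e -> U a]].

Definition fuzzy_peak (V : set X) : set (X -> R) :=
  [set g | fuzzy d g /\ exists e, [/\ 0 < e, e <= 1 / 4 &
     exists2 b, 1 / 2 + e < g b & forall c, d b c < e -> V c]].

Lemma sub_open_fuzzy_inside {D} U : pointwise_controlled d D ->
  sub_open (fuzzy d) D (fuzzy_inside U).
Proof.
move=> Dc; split=> [g []//|g [fg [e [e0 e4 gU]]]].
exists (e / 2) => [|g' fg' gg']; first lra.
split=> //; exists (e / 2); split=> [||a' a g'a' a'a]; [lra|lra|].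
have [_ near] := Dc _ _ fg fg' _ gg'.
have [|a'' a'a'' ga''] := near a' (g' a') _ (lexx _); first lra.
by apply: (gU a''); [lra|have := metric_triangle dm a'' a' a; rewrite (metricC dm a'' a'); lra].
Qed.

Lemma sub_open_fuzzy_peak {D} V : pointwise_controlled d D ->
  sub_open (fuzzy d) D (fuzzy_peak V).
Proof.
move=> Dc; split=> [g []//|g [fg [e [e0 e4 [b gb bV]]]]].
exists (e / 2) => [|g' fg' gg']; first lra.
split=> //; exists (e / 2); split; [lra|lra|].
have [near _] := Dc _ _ fg fg' _ gg'.
have [|c bc gc] := near b (g b) _ (lexx _); first lra.
exists c => [|c' cc']; first lra.
by apply: bV; have := metric_triangle dm b c c'; lra.
Qed.

Lemma fuzzy_inside_nonempty {U} : mopen d U -> U !=set0 -> fuzzy_inside U !=set0.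
Proof.
move=> oU [u Uu]; have [e e0 uU] := oU u Uu.
exists (fin_fuzzy (fun _ : 'I_1 => u) (fun=> 1 : R)).
split; first exact: fin_indicator_fuzzy.
exists (Num.min e (1 / 4)); set m := Num.min e (1 / 4).
have [m0 m1 m2] : [/\ 0 < m, m <= 1 / 4 & m <= e].
  by rewrite lt_min ge_min e0 divr_gt0 // lexx orbT ge_min lexx.
split=> // a' a ua'.
have ga0 : 0 < fin_fuzzy (fun _ : 'I_1 => u) (fun=> 1 : R) a' by lra.
have [j <-] := fin_indicator_gt0 _ _ ga0.
by move=> /= ua; apply: uU; lra.
Qed.

Lemma mem_fuzzy_peak V g x e : fuzzy d g -> 1 <= g x -> 0 < e ->
  (forall c, d x c < e -> V c) -> fuzzy_peak V g.
Proof.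
move=> fg gx e0 xV; split=> //.
exists (Num.min e (1 / 4)); set m := Num.min e (1 / 4).
have [m0 m1 m2] : [/\ 0 < m, m <= 1 / 4 & m <= e].
  by rewrite lt_min ge_min e0 divr_gt0 // lexx orbT ge_min lexx.
split=> //; exists x => [|c xc]; first lra.
by apply: xV; lra.
Qed.

Lemma fuzzy_peak2_nonempty {V W} : mopen d V -> mopen d W -> V !=set0 -> W !=set0 ->
  (fuzzy_peak V `&` fuzzy_peak W) !=set0.
Proof.
move=> oV oW [v Vv] [w Ww]; have [ev ev0 vV] := oV v Vv; have [ew ew0 wW] := oW w Ww.
pose vw (i : 'I_2) := if i == ord0 then v else w.
have fz : fuzzy d (fin_fuzzy vw (fun=> 1 : R)) by apply: fin_indicator_fuzzy.
exists (fin_fuzzy vw (fun=> 1 : R)); split.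
  exact: mem_fuzzy_peak fz (fin_indicator_ge1 vw ord0) ev0 vV.
exact: mem_fuzzy_peak fz (fin_indicator_ge1 vw ord_max) ew0 wW.
Qed.

Lemma fuzzy_transitive_bitransitive A D : Furstenberg_family A ->
  pointwise_controlled d D -> A_transitive (sub_open (fuzzy d) D) (zadeh f) A ->
  A_bitransitive d f A.
Proof.
move=> [_ FA] Dc ZT U V W oU oV oW nU nV nW.
apply: FA (ZT _ _ (sub_open_fuzzy_inside U Dc)
  (sub_openI (sub_open_fuzzy_peak V Dc) (sub_open_fuzzy_peak W Dc))
  (fuzzy_inside_nonempty oU nU) (fuzzy_peak2_nonempty oV oW nV nW)) _.
move=> n [g [_ [e [e0 e4 gU]]]] [[_ [e1 [e10 _ [b gb bV]]]] [_ [e2 [e20 _ [b' gb' b'W]]]]].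
have [h12 gb2 gb'2] : [/\ (0 : R) <= 1 / 2, 1 / 2 < iter n (zadeh f) g b
                             & 1 / 2 < iter n (zadeh f) g b'] by split; lra.
have [a ab ga] := iter_zadeh_gt f n g b _ h12 gb2.
have [a' ab' ga'] := iter_zadeh_gt f n g b' _ h12 gb'2.
split; [exists a|exists a'].
- by apply: (gU a); rewrite ?metric_xx //; lra.
- by rewrite ab; apply: bV; rewrite metric_xx.
- by apply: (gU a'); rewrite ?metric_xx //; lra.
- by rewrite ab'; apply: b'W; rewrite metric_xx.
Qed.

End FuzzyTransitivity.

Theorem theorem3p1 (X : Type) (d : X -> X -> Rdefinitions.R) (f : X -> X)
  (A : set (set nat)) :
  Furstenberg_family A -> is_metric d -> mcontinuous d f ->
  [<-> weakly_mixing d f /\ A_transitive (mopen d) f A;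
       forall N : nat, (0 < N)%N -> A_transitive (prod_open d N) (prodmap f N) A;
       A_transitive (sub_open (Kspace d) (hausdorff d)) (fun K => f @` K) A;
       A_transitive (sub_open (fuzzy d) (d_inf d)) (zadeh f) A;
       A_transitive (sub_open (fuzzy d) (d_0 d)) (zadeh f) A;
       A_transitive (sub_open (fuzzy d) (d_S d)) (zadeh f) A;
       A_transitive (sub_open (fuzzy d) (d_E d)) (zadeh f) A].
Proof.
move=> FA dm fc.
have wm_prod : weakly_mixing d f /\ A_transitive (mopen d) f A ->
    forall N, (0 < N)%N -> A_transitive (prod_open d N) (prodmap f N) A.
  by case=> wm At N; apply: (weakly_mixing_prod_transitive dm fc).
have bi_wm : A_bitransitive d f A -> weakly_mixing d f /\ A_transitive (mopen d) f A.
  move=> bt; split; last exact: bitransitive_transitive.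
  exact/(bitransitive_weakly_mixing dm fc)/(bitransitive_nonempty _ FA).
have fuzzy_bi D : pointwise_controlled d D ->
    A_transitive (sub_open (fuzzy d) D) (zadeh f) A -> A_bitransitive d f A.
  exact: (fuzzy_transitive_bitransitive dm A D FA).
have prod_fuzzy D : net_bounded d D ->
    (forall N, (0 < N)%N -> A_transitive (prod_open d N) (prodmap f N) A) ->
    A_transitive (sub_open (fuzzy d) D) (zadeh f) A.
  exact: (prod_transitive_fuzzy_transitive dm A D FA).
split; first exact: wm_prod.
split; first exact: (prod_transitive_hyperspace_transitive dm A FA).
split; first by move/(hyperspace_transitive_bitransitive dm A FA)/bi_wm/wm_prod;
  apply: prod_fuzzy (net_bounded_d_inf dm).
split; first by move/(fuzzy_bi _ (pointwise_controlled_d_inf dm))/bi_wm/wm_prod;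
  apply: prod_fuzzy (net_bounded_d_0 dm).
split; first by move/(fuzzy_bi _ (pointwise_controlled_d_0 dm))/bi_wm/wm_prod;
  apply: prod_fuzzy (net_bounded_d_S dm).
split; first by move/(fuzzy_bi _ (pointwise_controlled_d_S dm))/bi_wm/wm_prod;
  apply: prod_fuzzy (net_bounded_d_E dm).
by move/(fuzzy_bi _ (pointwise_controlled_d_E dm))/bi_wm.
Qed.
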